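(* Assume that $\mathfrak c$ is regular and that there exist $\mathfrak c$ pairwise incomparable selective ultrafilters on $\omega$. Then there exists $X$ with $\omega\subseteq X\subseteq\beta\omega$ such that $\omega^\alpha$ is relatively countably compact in $X^\alpha$ for each $\alpha<\mathfrak c$, but $\operatorname{CL}(X)$ is not pseudocompact.
   Context: $\beta\omega$ is the Stone–Čech compactification of the discrete space $\omega$ (ultrafilters on $\omega$). A free ultrafilter $q$ on $\omega$ is selective if for every partition of $\omega$ into pieces not in $q$ there is a set in $q$ meeting each piece in at most one point. Two ultrafilters $q_0,q_1$ on $\omega$ are incomparable if for every bijection $f:\omega\to\omega$, the ultrafilter generated by $\{f[A]:A\in q_0\}$ is not $q_1$. A subset $Y$ of a space $Z$ is relatively countably compact in $Z$ if every countably infinite subset of $Y$ has an accumulation point in $Z$. Powers carry the product topology. $\operatorname{CL}(X)$ is the set of nonempty closed subsets of $X$ with the Vietoris topology; pseudocompact means every continuous real-valued function is bounded. *)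

From HB Require Import structures.
From mathcomp Require Import all_boot all_order all_algebra.
From mathcomp Require Import all_classical all_reals all_analysis.
From mathcomp Require Import Rstruct Rstruct_topology.

Set Implicit Arguments.
Unset Strict Implicit.
Unset Printing Implicit Defensive.

Import Num.Theory.
Local Open Scope classical_set_scope.
Local Open Scope ring_scope.

Definition lt_c {T : Type} (A : set T) : Prop :=
  ~ ([set: set nat] #<= A)%card.

(** c is regular (cf(c) = c): a union of fewer than c sets, each of
    cardinality less than c, has cardinality less than c.  (All the sets are
    taken inside a carrier of cardinality c, namely P(omega).) *)
Definition c_regular : Prop :=
  forall F : set (set (set nat)),
    lt_c F -> (forall A, F A -> lt_c A) -> lt_c (\bigcup_(A in F) A).

Definition free_ultrafilter (q : set_system nat) : Prop :=
  UltraFilter q /\ \bigcap_(A in q) A = set0.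

Definition selective (q : set_system nat) : Prop :=
  free_ultrafilter q /\
  forall P : set (set nat),
    (forall C, P C -> C !=set0) ->
    (forall C D, P C -> P D -> C <> D -> C `&` D = set0) ->
    \bigcup_(C in P) C = setT ->
    (forall C, P C -> ~ q C) ->
    exists2 B, q B &
      forall C, P C -> forall x y, (B `&` C) x -> (B `&` C) y -> x = y.

Definition image_filter (f : nat -> nat) (q : set_system nat) : set_system nat :=
  [set B | exists2 A, q A & f @` A `<=` B].

Definition incomparable (q0 q1 : set_system nat) : Prop :=
  forall f : nat -> nat, bijective f -> image_filter f q0 <> q1.

(** [sysnat] is the type of all set systems on omega, topologized by the
    subbase { {p | A \in p} : A \subseteq omega }.  beta omega is the subspace
    of ultrafilters (the usual Stone topology); omega is embedded as the
    principal ultrafilters. *)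
Definition sysnat := set_system nat.
HB.instance Definition _ := Pointed.on sysnat.
HB.instance Definition _ :=
  isSubBaseTopological.Build sysnat (@setT (set nat))
    (fun A : set nat => [set p : sysnat | p A]).

Definition beta_omega : set sysnat := [set p | UltraFilter p].
Definition omega_in_beta : set sysnat := [set principal_filter n | n in setT].

Definition rel_countably_compact (Z : topologicalType) (Y : set Z) : Prop :=
  forall S : set Z, S `<=` Y -> countable S -> infinite_set S ->
    exists z : Z, limit_point S z.

Definition vietoris (T : Type) := set T.
HB.instance Definition _ (T : topologicalType) := Pointed.on (vietoris T).
(** subbase: <U>^+ = {A | A \subseteq U} and U^- = {A | A meets U}, U open *)
HB.instance Definition _ (T : topologicalType) :=
  isSubBaseTopological.Build (vietoris T)
    [set Ub : set T * bool | open Ub.1]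
    (fun Ub => if Ub.2 then [set A : vietoris T | A `<=` Ub.1]
               else [set A : vietoris T | A `&` Ub.1 !=set0]).

Definition CL (T : topologicalType) : set (vietoris T) :=
  [set A | closed A /\ A !=set0].

Definition pseudocompact (T : topologicalType) : Prop :=
  forall f : T -> Rdefinitions.R, continuous f ->
    exists M : Rdefinitions.R, forall x, `|f x| <= M.
Arguments CL T : clear implicits.

(** The levels F_m of the binary tree (its nodes of height m, coded in ω) are
    finite and pairwise disjoint, and every x ⊆ ω runs through them along the
    branch m ↦ x|m.  For a free ultrafilter v the v-limits of the c branches are
    pairwise distinct, and since the q_a are selective and pairwise incomparable,
    two of them can be g(q_a) and g'(q_b) only if a = b.  Regularity of c gives
    families G_a of fewer than c functions such that every set of fewer than c
    functions lies in one G_a; so some branch limit along v is no g(q_a) with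
    g ∈ G_a.  X is βω minus one such point for every v.

    A sequence in ω^J, |J| < c, has its coordinates in one G_a, so its q_a-limit
    lies in X^J.  Each F_m is an isolated point of CL(X), so sending F_m to m + 1
    and every other closed set to 0 is continuous unless some closed B is a limit
    of levels of unbounded height.  These heights would then converge along a
    free ultrafilter v, and B would either contain the removed v-limit of a
    branch or avoid a neighbourhood of that branch, which every F_m meets. *)

From HB Require Import structures.
From mathcomp Require Import all_boot all_order all_algebra.
From mathcomp Require Import all_classical all_reals all_analysis.
From mathcomp Require Import Rstruct Rstruct_topology.
From mathcomp Require wochoice.

Set Implicit Arguments.
Unset Strict Implicit.
Unset Printing Implicit Defensive.

Import Order.TTheory Num.Theory.
Local Open Scope classical_set_scope.

(** * Ultrafilters on ω *)

Lemma setVsetC_ultra (T : Type) (F : set_system T) :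
  ProperFilter F -> (forall A, F A \/ F (~` A)) -> UltraFilter F.
Proof.
move=> PF FAC; split => // G PG FG; apply/seteqP; split => // A GA.
case: (FAC A) => // /FG GAC.
by have /filter_ex [x [Ax /(_ Ax)]] : G (A `&` ~` A) by exact: filterI.
Qed.

Lemma ultra_setU (T : Type) (F : set_system T) (A B : set T) :
  UltraFilter F -> F (A `|` B) -> F A \/ F B.
Proof.
move=> UF FAB; case: (in_ultra_setVsetC A UF) => [|FAC]; first by left.
case: (in_ultra_setVsetC B UF) => [|FBC]; first by right.
have [x [ABx [nAx nBx]]] := filter_ex (filterI FAB (filterI FAC FBC)).
by case: ABx => [/nAx|/nBx].
Qed.

Lemma ultra_set1_principal (T : Type) (p : set_system T) (k : T) :
  UltraFilter p -> p [set k] -> p = principal_filter k.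
Proof.
move=> Up pk; apply: esym; apply: (@max_filter _ p Up).
  exact: principal_filter_proper.
move=> A pA; apply/principal_filterP.
by have /filter_ex [y [Ay <-]] : p (A `&` [set k]) by exact: filterI.
Qed.

Lemma image_filterE (f : nat -> nat) (F : set_system nat) :
  Filter F -> image_filter f F = fmap f F.
Proof.
move=> FF; apply/seteqP; split => B.
  by move=> [A FA fAB]; rewrite fmapE; apply: filterS FA => x Ax; apply: fAB; exists x.
by move=> Ff; exists (f @^-1` B) => //; exact: image_preimage_subset.
Qed.

Lemma fmap_ultra (T U : Type) (f : T -> U) (F : set_system T) :
  UltraFilter F -> UltraFilter (fmap f F).
Proof.
move=> UF; apply: setVsetC_ultra => A.
exact: (in_ultra_setVsetC (f @^-1` A) UF).
Qed.

Lemma eq_fmap_near (T U : Type) (f g : T -> U) (F : set_system T) :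
  Filter F -> F [set x | f x = g x] -> fmap f F = fmap g F.
Proof.
move=> FF Ffg; apply/seteqP; split => B; rewrite !fmapE => FB;
  by apply: filterS (filterI FB Ffg) => x /= [+ fgx]; rewrite fgx.
Qed.

Lemma free_ultra_finite (v : set_system nat) (A : set nat) :
  free_ultrafilter v -> finite_set A -> ~ v A.
Proof.
move=> [Uv v0] /finite_seqP [s ->]; elim: s => [|k s IH] /=.
  by move/filter_ex => [].
have -> : [set` k :: s] = [set k] `|` [set` s].
  apply/seteqP; split => x /=; rewrite inE.
    by case/orP => [/eqP ->|]; [left|right].
  by case=> [->|sx]; rewrite ?eqxx ?sx ?orbT.
case/(ultra_setU Uv) => // vk.
have : (\bigcap_(B in v) B) k by move=> B vB; have [y [By <-]] := filter_ex (filterI vB vk).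
by rewrite v0.
Qed.

Lemma free_ultra_cofinite (v : set_system nat) (A : set nat) :
  free_ultrafilter v -> finite_set (~` A) -> v A.
Proof.
move=> fv /(free_ultra_finite fv) vAC.
by case: (in_ultra_setVsetC A fv.1).
Qed.

Lemma free_ultra_ge (v : set_system nat) (k : nat) :
  free_ultrafilter v -> v [set n | (k <= n)%N].
Proof.
move=> fv; apply: free_ultra_cofinite => //; apply: sub_finite_set (finite_II k).
by move=> n /negP; rewrite -ltnNge.
Qed.

Lemma free_ultra_subsingleton (v : set_system nat) (A : set nat) :
  free_ultrafilter v -> (forall x y, A x -> A y -> x = y) -> ~ v A.
Proof.
move=> fv A1 vA; have Uv := fv.1; have [x Ax] := filter_ex vA.
apply: (free_ultra_finite fv) vA.
by apply: sub_finite_set (finite_set1 x) => y Ay; exact: A1.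
Qed.

Lemma selective_const_or_inj (q : set_system nat) (g : nat -> nat) :
  selective q ->
  (exists y, q (g @^-1` [set y])) \/
  (exists2 B, q B & forall x y, B x -> B y -> g x = g y -> x = y).
Proof.
move=> [_ qsel]; have [|gNconst] := pselect (exists y, q (g @^-1` [set y])).
  by left.
right; pose P := [set g @^-1` [set y] | y in range g].
have [||||B qB Bsel] := qsel P.
- by move=> _ [_ [x _ <-] <-]; exists x.
- move=> _ _ [y _ <-] [z _ <-] yz; apply/seteqP; split => // x [/= gxy gxz].
  by case: yz; rewrite -gxy -gxz.
- by apply/seteqP; split => // x _; exists (g @^-1` [set g x]) => //; exists (g x).
- by move=> _ [y _ <-] qy; apply: gNconst; exists y.
exists B => // x y Bx By gxy; apply: (Bsel (g @^-1` [set g x])) => //.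
by exists (g x) => //; exists x.
Qed.

Lemma ultra_coinfinite (q : set_system nat) :
  UltraFilter q -> exists2 P, q P & infinite_set (~` P).
Proof.
have range_inf (f : nat -> nat) : injective f -> infinite_set (range f).
  move=> finj; apply/infiniteP/pcard_leP/injfunPex; exists f => //.
  by move=> x y _ _; exact: finj.
have evens_inf : infinite_set [set n | ~~ odd n].
  apply: sub_infinite_set (range_inf _ double_inj) => _ [n _ <-].
  by rewrite /= odd_double.
have odds_inf : infinite_set (~` [set n | ~~ odd n]).
  have sdouble_inj : injective (fun n => n.*2.+1) by move=> m n [/double_inj].
  apply: sub_infinite_set (range_inf _ sdouble_inj) => _ [n _ <-].
  by rewrite /= odd_double.
move=> Uq; case: (in_ultra_setVsetC [set n | ~~ odd n] Uq) => qP.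
  by exists [set n | ~~ odd n].
by exists (~` [set n | ~~ odd n]); rewrite ?setCK.
Qed.

Lemma infinite_set_bij (A B : set nat) :
  infinite_set A -> infinite_set B -> exists e, set_bij A B e.
Proof.
move=> iA iB; apply/card_set_bijP.
have eqT (C : set nat) : infinite_set C -> (C #= [set: nat])%card.
  by move=> iC; apply: eq_card_nat => //; exact: card_leT.
exact: card_eq_trans (eqT _ iA) (card_esym (eqT _ iB)).
Qed.

Lemma glue_bijective (H : set nat) (k e : nat -> nat) :
  (forall x y, H x -> H y -> k x = k y -> x = y) ->
  set_bij (~` H) (~` (k @` H)) e ->
  bijective (fun x => if `[< H x >] then k x else e x).
Proof.
move=> kinj [efun einj esurj]; set f := fun x => _.
have fH x : H x -> f x = k x by move=> Hx; rewrite /f asboolT.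
have fN x : ~ H x -> f x = e x by move=> Hx; rewrite /f asboolF.
rewrite -setTT_bijective; split=> // [x y _ _|y _].
  have [Hx|Hx] := pselect (H x); have [Hy|Hy] := pselect (H y).
  - by rewrite !fH //; exact: kinj.
  - by rewrite fH ?fN // => kxy; case: (efun y Hy); exists x.
  - by rewrite fN ?fH // => kxy; case: (efun x Hx); exists y.
  - by rewrite !fN // => exy; apply: einj => //; exact/mem_set.
have [[x Hx <-]|kHy] := pselect ((k @` H) y); first by exists x; rewrite ?fH.
by have [x Hx <-] := esurj y kHy; exists x; rewrite ?fN.
Qed.

Lemma ultra_bij_extend (q : set_system nat) (k : nat -> nat) (H : set nat) :
  UltraFilter q -> q H -> (forall x y, H x -> H y -> k x = k y -> x = y) ->
  exists2 f, bijective f & q [set x | f x = k x].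
Proof.
move=> Uq qH kinj.
have [P1 qP1 P1C_inf] := ultra_coinfinite Uq.
have [P2 qP2 P2C_inf] := ultra_coinfinite (fmap_ultra k Uq).
pose H' := H `&` P1 `&` k @^-1` P2.
have qH' : q H' by apply: filterI => //; exact: filterI.
have H'C_inf : infinite_set (~` H').
  by apply: sub_infinite_set P1C_inf => n P1n [[_ /P1n]].
have kH'C_inf : infinite_set (~` (k @` H')).
  by apply: sub_infinite_set P2C_inf => n P2Cn [x [_ P2kx] kxn]; apply: P2Cn; rewrite -kxn.
have [e ebij] := infinite_set_bij H'C_inf kH'C_inf.
exists (fun x => if `[< H' x >] then k x else e x).
  by apply: glue_bijective ebij => x y [[Hx _] _] [[Hy _] _]; exact: kinj.
by apply: filterS qH' => x H'x /=; rewrite asboolT.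
Qed.

Lemma selective_fmap_bij (qa qb : set_system nat) (h g : nat -> nat) :
  selective qa -> selective qb -> fmap h qa = fmap g qb ->
  (forall y, ~ qa (h @^-1` [set y])) ->
  exists2 f, bijective f & fmap f qa = qb.
Proof.
move=> qa_sel qb_sel hg hNconst; have Ua := qa_sel.1.1; have Ub := qb_sel.1.1.
have [[y qay]|[H qaH hinj]] := selective_const_or_inj h qa_sel.
  by case: (hNconst y).
have [[y qby]|[K qbK ginj]] := selective_const_or_inj g qb_sel.
  by case: (hNconst y); change (fmap h qa [set y]); rewrite hg.
have qa_hgK : qa (h @^-1` (g @` K)).
  change (fmap h qa (g @` K)); rewrite hg fmapE.
  by apply: filterS qbK => y Ky; exists y.
pose H1 := H `&` h @^-1` (g @` K).
pose k x := xget 0 [set y | K y /\ g y = h x].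
have kP x : H1 x -> K (k x) /\ g (k x) = h x.
  by move=> [_ [y Ky gyhx]]; apply: (xgetPex 0 (P := [set y | K y /\ g y = h x])); exists y.
have kinj x y : H1 x -> H1 y -> k x = k y -> x = y.
  move=> H1x H1y kxy; apply: hinj; [exact: H1x.1|exact: H1y.1|].
  by rewrite -(kP x H1x).2 -(kP y H1y).2 kxy.
have qaH1 : qa H1 by exact: filterI.
have kqa : fmap k qa = qb.
  apply: (@max_filter _ qb Ub).
  move=> B qbB; have : fmap g qb (g @` (B `&` K)).
    by rewrite fmapE; apply: filterS (filterI qbB qbK) => y BKy; exists y.
  rewrite -hg !fmapE => qaC.
  apply: filterS (filterI qaC qaH1) => x [[y [By Ky] gyhx] H1x].
  have [Kkx gkx] := kP x H1x.
  by rewrite /= (ginj (k x) y) // gkx.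
have [f fbij qafk] := ultra_bij_extend Ua qaH1 kinj.
by exists f; rewrite // -kqa; exact: eq_fmap_near.
Qed.

(** * Cardinals below c *)

Lemma lt_c_le (T U : Type) (A : set T) (B : set U) :
  (A #<= B)%card -> lt_c B -> lt_c A.
Proof. by move=> AB Bsmall cA; apply: Bsmall; exact: card_le_trans cA AB. Qed.

Lemma lt_c_image (T U : Type) (f : T -> U) (A : set T) : lt_c A -> lt_c (f @` A).
Proof. exact: lt_c_le (card_image_le f A). Qed.

Lemma lt_c_finite (T : Type) (A : set T) : finite_set A -> lt_c A.
Proof.
move=> Afin cA; suff : finite_set [set: set nat].
  apply/infiniteP/pcard_leP/injfunPex; exists set1 => // x y _ _ xy.
  by have : [set y] x by rewrite -xy.
exact: card_le_finite cA Afin.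
Qed.

Lemma lt_c_no_inj (T : pointedType) (B : set T) (phi : set nat -> T) :
  lt_c B -> injective phi -> ~ (forall x, B (phi x)).
Proof.
move=> Bsmall phi_inj phiB; apply: Bsmall; apply/pcard_leP/injfunPex.
by exists phi => // x y _ _; exact: phi_inj.
Qed.

Lemma lt_c_setU (A B : set (set nat)) :
  c_regular -> lt_c A -> lt_c B -> lt_c (A `|` B).
Proof.
move=> creg Asmall Bsmall; have := creg [set A; B] (lt_c_finite (finite_set2 A B)).
have /[swap] /[apply] : forall C, [set A; B] C -> lt_c C by move=> C [->|->].
apply: lt_c_le; apply: subset_card_le => x [Ax|Bx]; first by exists A => //; left.
by exists B => //; right.
Qed.

Lemma lt_c_set_type (J : set (set nat)) : lt_c J -> lt_c [set: set_type J].
Proof. by apply: lt_c_le; apply/pcard_leP/injfunPex; exists set_val. Qed.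

Lemma exists_well_order (T : eqType) : exists r : rel T,
  [/\ total r, antisymmetric r &
      forall P : set T, P !=set0 -> exists2 z, P z & forall t, P t -> r z t].
Proof.
have [r r_wo] := wochoice.well_ordering_principle T.
have r_chain : wochoice.wo_chain r predT by move=> A _; exact: r_wo.
exists r; split.
- by move=> x y; exact: (wochoice.wo_chainW r_chain).
- by move=> x y; exact: (wochoice.wo_chain_antisymmetric r_chain).
move=> P [x Px]; have [|z [[Pz zmin] _]] := r_wo [pred y | `[< P y >]].
  by rewrite /wochoice.nonempty; exists x; rewrite inE.
by exists z => [|t Pt]; [move: Pz; rewrite inE|apply: zmin; rewrite inE].
Qed.

Section ContinuumWellOrder.
Hypothesis creg : c_regular.
Variable r : rel (set nat).
Hypotheses (r_total : total r) (r_anti : antisymmetric r).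
Hypothesis r_min :
  forall P : set (set nat), P !=set0 -> exists2 z, P z & forall t, P t -> r z t.

Let seg (x : set nat) := [set y | r y x].
(* An initial segment of order type c. *)
Let short := [set x | lt_c (seg x)].

Lemma short_card : ([set: set nat] #<= short)%card.
Proof.
apply: contrapT => short_small.
have [[x0 short_x0 x0_min]|] := pselect (exists2 x0, ~ short x0 & forall t, ~ short t -> r x0 t).
  apply: short_x0; apply: lt_c_le (lt_c_setU creg short_small (lt_c_finite (finite_set1 x0))).
  apply: subset_card_le => y ryx0; have [|NSy] := pselect (short y); first by left.
  by right; apply/r_anti/andP; split => //; exact: x0_min.
move=> NSmin; apply: short_small; apply: subset_card_le => x _; apply: contrapT => NSx.
by apply: NSmin; apply: r_min; exists x.
Qed.

Lemma short_bounded (C : set (set nat)) :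
  C `<=` short -> lt_c C -> exists2 b, short b & C `<=` seg b.
Proof.
move=> C_short C_small; apply: contrapT => C_unbounded.
suff : lt_c short by apply; exact: short_card.
apply: (@lt_c_le _ _ _ (\bigcup_(A in seg @` C) A)); last first.
  by apply: creg; [exact: lt_c_image|move=> _ [c /C_short Sc <-]].
apply: subset_card_le => b Sb; apply: contrapT => b_above; apply: C_unbounded.
exists b => // c Cc; have /orP[//|rbc] := r_total c b.
by case: b_above; exists (seg c); [exists c|].
Qed.

End ContinuumWellOrder.

Definition graph_code (g : nat -> nat) : set nat := [set pickle (n, g n) | n in [set: nat]].

Lemma graph_code_inj : injective graph_code.
Proof.
move=> g g' gg'; apply: funext => n.
have : graph_code g' (pickle (n, g n)) by rewrite -gg'; exists n.
by move=> [m _ /(pcan_inj pickleK)] [-> ->].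
Qed.

Lemma c_regular_cofinal_family : c_regular -> exists G : set nat -> set (nat -> nat),
  (forall a, lt_c (G a)) /\ (forall A, lt_c A -> exists a, A `<=` G a).
Proof.
move=> creg; have [r [r_total r_anti r_min]] := exists_well_order (set nat).
pose short := [set x | lt_c [set y | r y x]].
have /pcard_leP/injfunPex [iota iota_short iota_inj] := short_card creg r_anti r_min.
pose G a := [set g | short a /\ r (iota (graph_code g)) a].
exists G; split => [a|A A_small].
  have [Sa|NSa] := pselect (short a).
    apply: lt_c_le Sa; apply/pcard_leP/injfunPex; exists (iota \o graph_code).
      by move=> g [].
    by move=> g g' _ _ e; apply: graph_code_inj; apply: iota_inj e; exact/mem_set.
  by apply: lt_c_finite; apply: sub_finite_set (finite_set0 _) => g [].
have [||b Sb A_below] := short_bounded creg r_total r_anti r_min (C := (iota \o graph_code) @` A).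
- by move=> _ [g _ <-]; apply: iota_short.
- exact: lt_c_image.
by exists b => g Ag; split => //; apply: A_below; exists g.
Qed.

(** * Branches of the binary tree *)

Definition branch (x : set nat) (m : nat) : m.-tuple bool := [tuple `[< x i >] | i < m].

Definition branch_code (x : set nat) (m : nat) : nat := pickle (m, val (branch x m)).

(* [level m] codes the nodes of height m; [branch_code x m] is the node x|m. *)
Definition level (m : nat) : set nat := [set pickle (m, val t) | t in [set: m.-tuple bool]].

Definition level_of (k : nat) : nat :=
  if unpickle k : option (nat * seq bool) is Some (m, _) then m else 0.

Lemma level_ofK (m : nat) (s : seq bool) : level_of (pickle (m, s)) = m.
Proof. by rewrite /level_of pickleK. Qed.

Lemma branch_code_level (x : set nat) (m : nat) : level m (branch_code x m).
Proof. by exists (branch x m). Qed.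

Lemma level_disj (m m' k : nat) : level m k -> level m' k -> m = m'.
Proof. by move=> [t _ <-] [t' _ /(congr1 level_of)]; rewrite !level_ofK. Qed.

Lemma branch_code_inj (x : set nat) : injective (branch_code x).
Proof. by move=> m m' /(congr1 level_of); rewrite !level_ofK. Qed.

Lemma branch_code_eventually_neq (x y : set nat) :
  x <> y -> exists i, forall m, (i < m)%N -> branch_code x m <> branch_code y m.
Proof.
move=> xy; have [i xyi] : exists i, ~ (x i <-> y i).
  apply: contrapT => xy_ext; apply: xy; apply: funext => i; apply: propext.
  by apply: contrapT => xyi; apply: xy_ext; exists i.
exists i => m im /(pcan_inj pickleK) /(congr1 snd) /val_inj.
move=> /(congr1 (fun t => tnth t (Ordinal im))); rewrite !tnth_mktuple /= => xyb.
by apply: xyi; exact: asbool_eq_equiv xyb.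
Qed.

Lemma branch_code_nonprincipal (v : set_system nat) (x : set nat) (k : nat) :
  free_ultrafilter v -> ~ v (branch_code x @^-1` [set k]).
Proof.
move=> fv; apply: free_ultra_subsingleton fv _ => m m' /= mk m'k.
by apply: (@branch_code_inj x); rewrite mk m'k.
Qed.

Lemma fmap_branch_code_neq (v : set_system nat) (x y : set nat) :
  free_ultrafilter v -> x <> y -> fmap (branch_code x) v <> fmap (branch_code y) v.
Proof.
move=> fv /branch_code_eventually_neq [i xy_above] xvyv; have Uv := fv.1.
have vi := free_ultra_ge i.+1 fv.
have : fmap (branch_code y) v (branch_code x @` [set m | (i < m)%N]).
  by rewrite -xvyv fmapE; apply: filterS vi => m im; exists m.
rewrite fmapE => vE; have [m [[m' im' xm'ym] im]] := filter_ex (filterI vE vi).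
have m'm : m' = m.
  by apply: (level_disj (branch_code_level x m')); rewrite xm'ym; exact: branch_code_level.
by apply: (xy_above m im); rewrite -xm'ym m'm.
Qed.

Lemma fmap_branch_code_change (v : set_system nat) (x y : set nat) :
  fmap (branch_code y) v = fmap (branch_code y \o level_of) (fmap (branch_code x) v).
Proof.
change (fmap (branch_code y) v = fmap ((branch_code y \o level_of) \o branch_code x) v).
by congr (fmap _ v); apply: funext => m /=; rewrite level_ofK.
Qed.

Section BranchLimits.
Variable q : set nat -> set_system nat.
Hypothesis q_sel : forall a, selective (q a).
Hypothesis q_incomp : forall a b, a <> b -> incomparable (q a) (q b).
Variable G : set nat -> set (nat -> nat).
Hypothesis G_small : forall a, lt_c (G a).

Definition G_image (p : set_system nat) := exists a g, G a g /\ p = fmap g (q a).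

Lemma branch_limit_index (v : set_system nat) (x y a b : set nat) (g g' : nat -> nat) :
  free_ultrafilter v -> fmap (branch_code x) v = fmap g (q a) ->
  fmap (branch_code y) v = fmap g' (q b) -> a = b.
Proof.
move=> fv xg yg'; apply: contrapT => ab.
have eq_y : fmap (branch_code y \o level_of \o g) (q a) = fmap (branch_code y) v.
  by rewrite (fmap_branch_code_change v x y) xg.
have [|f fbij qaqb] := selective_fmap_bij (q_sel a) (q_sel b) (etrans eq_y yg').
  by move=> k; change (~ fmap (branch_code y \o level_of \o g) (q a) [set k]);
    rewrite eq_y; exact: branch_code_nonprincipal.
have Uqa := (q_sel a).1.1.
by apply: (q_incomp ab fbij); rewrite image_filterE.
Qed.

Lemma exists_branch_limit_outside (v : set_system nat) :
  free_ultrafilter v -> exists x, ~ G_image (fmap (branch_code x) v).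
Proof.
move=> fv; apply: contrapT => all_images.
have /choice [ag ag_spec] : forall x, exists p : set nat * (nat -> nat),
    G p.1 p.2 /\ fmap (branch_code x) v = fmap p.2 (q p.1).
  move=> x; apply: contrapT => x_outside; apply: all_images; exists x.
  by move=> [a [g [Gag xg]]]; apply: x_outside; exists (a, g).
pose a0 := (ag set0).1.
have index_a0 x : (ag x).1 = a0 := branch_limit_index fv (ag_spec x).2 (ag_spec set0).2.
apply: (lt_c_no_inj (@G_small a0) (phi := fun x => (ag x).2)) => [x y xy|x].
  apply: contrapT => /(fmap_branch_code_neq fv); apply.
  by rewrite (ag_spec x).2 (ag_spec y).2 xy !index_a0.
by rewrite -(index_a0 x); exact: (ag_spec x).1.
Qed.

End BranchLimits.

(** * Topology *)

Lemma open_sysnat (A : set nat) : open [set p : sysnat | p A].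
Proof.
exists [set [set p : sysnat | p A]]; last by rewrite bigcup_set1.
by move=> _ ->; exact: (@finI_from1 _ _ setT (fun A : set nat => [set p : sysnat | p A])).
Qed.

Lemma sysnat_cvg (F : set_system sysnat) (p : sysnat) :
  Filter F -> (forall A, p A -> F [set w | w A]) -> F --> p.
Proof.
move=> FF pF U; rewrite nbhsE => -[W [[D Dfin <-] [E DE Ep]] WU].
apply: filterS WU _; apply: filterS (bigcup_sup DE) _.
have [fs _ fsE] := Dfin E DE; move: Ep; rewrite -fsE => Ep.
by apply: filter_bigI => A fsA; apply: pF; exact: Ep.
Qed.

Lemma set_val_cvg (T : topologicalType) (X : set T) (F : set_system (set_type X))
    (z : set_type X) :
  Filter F -> fmap set_val F --> set_val z -> F --> z.
Proof.
move=> FF Fz U; rewrite nbhsE => -[W [[V oV <-] Vz] WU].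
by apply: filterS WU _; apply: Fz; exact: open_nbhs_nbhs.
Qed.

Lemma ptws_cvg (I : Type) (K : topologicalType) (F : set_system {ptws I -> K})
    (z : {ptws I -> K}) :
  Filter F -> (forall i, fmap (fun f => f i) F --> z i) -> F --> z.
Proof.
move=> FF Fz; apply/cvg_sup => i U /= [_ [[V oV <-] Vz VU]].
by apply: filterS VU _; apply: Fz; exact: open_nbhs_nbhs.
Qed.

Lemma open_vietoris_sub (T : topologicalType) (U : set T) :
  open U -> open [set A : vietoris T | A `<=` U].
Proof.
move=> oU; exists [set [set A : vietoris T | A `<=` U]]; last by rewrite bigcup_set1.
by move=> _ ->; exact: (@finI_from1 _ _ _ _ (U, true)).
Qed.

Lemma open_vietoris_meet (T : topologicalType) (U : set T) :
  open U -> open [set A : vietoris T | A `&` U !=set0].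
Proof.
move=> oU; exists [set [set A : vietoris T | A `&` U !=set0]]; last by rewrite bigcup_set1.
by move=> _ ->; exact: (@finI_from1 _ _ _ _ (U, false)).
Qed.

Lemma infinite_set_injseq (T : Type) (S : set T) :
  infinite_set S -> exists2 s : nat -> T, (forall n, S (s n)) & injective s.
Proof.
move/infiniteP => /card_leP /injfunPex [F _ Finj].
exists (fun n => set_val (F (SigSub (@mem_set _ [set: nat] n I)))).
  by move=> n; exact: set_valP.
move=> n m /val_inj /Finj nm.
by have /(congr1 set_val) := nm (mem_set I) (mem_set I).
Qed.

Lemma limit_point_cvg_free (T : topologicalType) (S : set T) (s : nat -> T)
    (v : set_system nat) (z : T) :
  free_ultrafilter v -> injective s -> (forall n, S (s n)) -> fmap s v --> z ->
  limit_point S z.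
Proof.
move=> fv s_inj Ss sz U zU; have Uv := fv.1.
have vNz : v (~` [set n | s n = z]).
  have [vz|//] := in_ultra_setVsetC [set n | s n = z] Uv.
  by case: (free_ultra_subsingleton fv _ vz) => n m /= <- /s_inj.
have vU : v (s @^-1` U) := sz U zU.
have [n [Usn snz]] := filter_ex (filterI vU vNz).
by exists (s n); split => //; exact/eqP.
Qed.

Lemma open_CL_sub (T : topologicalType) (U : set T) :
  open U -> open [set B : set_type (CL T) | (set_val B : vietoris T) `<=` U].
Proof.
by move=> oU; exists [set A : vietoris T | A `<=` U] => //; exact: open_vietoris_sub.
Qed.

Lemma open_CL_meet (T : topologicalType) (U : set T) :
  open U -> open [set B : set_type (CL T) | (set_val B : vietoris T) `&` U !=set0].
Proof.
by move=> oU; exists [set A : vietoris T | A `&` U !=set0] => //; exact: open_vietoris_meet.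
Qed.

Lemma locally_constant_continuous (T U : topologicalType) (f : T -> U) :
  (forall x, \forall y \near x, f y = f x) -> continuous f.
Proof.
by move=> fconst x V fxV; apply: filterS (fconst x) => y /= ->; exact: nbhs_singleton.
Qed.

Lemma free_ultra_accumulating (T : topologicalType) (x : T) (P : nat -> set T) :
  (forall m, nbhs x (~` P m)) -> (forall N, nbhs x N -> exists m, N `&` P m !=set0) ->
  exists v, free_ultrafilter v /\ forall N, nbhs x N -> v [set m | N `&` P m !=set0].
Proof.
move=> P_far P_acc; pose meets N := [set m | N `&` P m !=set0].
pose Fx := [set S | exists2 N, nbhs x N & meets N `<=` S].
have Fx_proper : ProperFilter Fx.
  apply: Build_ProperFilter_ex => [S [N xN NS]|].
    by have [m Nm] := P_acc N xN; exists m; exact: NS.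
  split; first by exists setT => //; exact: filterT.
    move=> S1 S2 [N1 xN1 NS1] [N2 xN2 NS2]; exists (N1 `&` N2); first exact: filterI.
    by move=> m [y [[N1y N2y] Pmy]]; split; [apply: NS1|apply: NS2]; exists y.
  by move=> S1 S2 S12 [N xN NS1]; exists N => // m /NS1 /S12.
have [v [Uv Fxv]] := ultraFilterLemma Fx_proper.
exists v; split; last by move=> N xN; apply: Fxv; exists N.
split => //; apply/seteqP; split => // k vk.
suff : v [set m | (k < m)%N] by move/vk; rewrite /= ltnn.
apply: Fxv; exists [set y | forall i : 'I_k.+1, ~ P i y].
  by apply: filter_forall => i; exact: P_far.
move=> m [y [Ny Pmy]]; rewrite /= ltnNge; apply/negP => mk.
by rewrite -ltnS in mk; exact: (Ny (Ordinal mk) Pmy).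
Qed.

(** * The space X *)

Section Construction.
Variable q : set nat -> set_system nat.
Hypothesis q_sel : forall a, selective (q a).
Hypothesis q_incomp : forall a b, a <> b -> incomparable (q a) (q b).
Variable G : set nat -> set (nat -> nat).
Hypothesis G_small : forall a, lt_c (G a).
Hypothesis G_cofinal : forall A, lt_c A -> exists a, A `<=` G a.

Definition avoiding_branch (v : set_system nat) : set nat :=
  xget set0 [set x | ~ G_image q G (fmap (branch_code x) v)].

Definition removed_point (p : sysnat) : Prop :=
  exists2 v, free_ultrafilter v & p = fmap (branch_code (avoiding_branch v)) v.

Definition Xspace : set sysnat := [set p | UltraFilter p /\ ~ removed_point p].

Lemma avoiding_branchP (v : set_system nat) :
  free_ultrafilter v -> ~ G_image q G (fmap (branch_code (avoiding_branch v)) v).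
Proof.
by move=> fv; exact: (xgetPex set0 (exists_branch_limit_outside q_sel q_incomp G_small fv)).
Qed.

Lemma principal_in_Xspace (k : nat) : Xspace (principal_filter k).
Proof.
split; first exact: principal_filter_ultra.
move=> [v fv vk]; apply: (branch_code_nonprincipal (x := avoiding_branch v) fv).
by rewrite -fmapE -vk; exact/principal_filterP.
Qed.

Lemma G_image_in_Xspace (p : sysnat) : G_image q G p -> Xspace p.
Proof.
move=> Gp; split; first by have [a [g [_ ->]]] := Gp; exact/fmap_ultra/(q_sel a).1.1.
by move=> [v fv pv]; apply: (avoiding_branchP fv); rewrite -pv.
Qed.

Lemma Xspace_omits_branch_limits (v : set_system nat) :
  free_ultrafilter v -> exists x, ~ Xspace (fmap (branch_code x) v).
Proof. by move=> fv; exists (avoiding_branch v) => -[_]; apply; exists v. Qed.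

Lemma Xspace_rel_countably_compact (J : set (set nat)) : lt_c J ->
  rel_countably_compact
    [set f : {ptws J -> set_type Xspace} | forall i, omega_in_beta (set_val (f i))].
Proof.
move=> J_small S S_omega _ S_inf; have [s Ss s_inj] := infinite_set_injseq S_inf.
pose coord (j : set_type J) (n : nat) := xget 0 [set k | set_val (s n j) = principal_filter k].
have coordP j n : set_val (s n j) = principal_filter (coord j n).
  have [k _ ks] := S_omega _ (Ss n) j.
  by apply: (xgetPex 0 (P := [set k | set_val (s n j) = principal_filter k])); exists k.
have [b coord_Gb] := G_cofinal (lt_c_image (f := coord) (lt_c_set_type J_small)).
have Uqb := (q_sel b).1.1.
have limX j : Xspace (fmap (coord j) (q b)).
  by apply: G_image_in_Xspace; exists b, (coord j); split => //; apply: coord_Gb; exists j.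
exists (fun j => SigSub (mem_set (limX j))).
apply: (limit_point_cvg_free (q_sel b).1 s_inj Ss).
apply: ptws_cvg => j; apply: (@set_val_cvg _ Xspace); apply: sysnat_cvg => A qbA.
change (q b (coord j @^-1` A)) in qbA.
by apply: (filterS (F := q b)) qbA => n Acjn; rewrite /= coordP; exact/principal_filterP.
Qed.

End Construction.

(** * The hyperspace CL(X) *)

Section Hyperspace.
Variable X : set sysnat.
Hypothesis X_ultra : X `<=` beta_omega.

Local Notation XT := (set_type X).
Local Notation CLX := (set_type (CL XT)).

Definition trace (P : set nat) : set XT := [set z | set_val z P].

Lemma ultra_point (z : XT) : UltraFilter (set_val z).
Proof. exact: X_ultra (set_valP z). Qed.

Lemma traceC (P : set nat) : trace (~` P) = ~` trace P.
Proof.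
apply/seteqP; split => z /=; last by have [|] := in_ultra_setVsetC P (ultra_point z).
move=> zPC zP; have Uz := ultra_point z.
by have [n [Pn /(_ Pn)]] := filter_ex (filterI zP zPC).
Qed.

Lemma open_trace (P : set nat) : open (trace P).
Proof. by exists [set p : sysnat | p P] => //; exact: open_sysnat. Qed.

Lemma closed_trace (P : set nat) : closed (trace P).
Proof. by rewrite -[P]setCK traceC; apply: open_closedC; exact: open_trace. Qed.

(* For closed [B], [block m B] says that [B] is the finite set [level m] of isolated points. *)
Definition block (m : nat) (B : set XT) : Prop :=
  B `<=` trace (level m) /\
  forall k, level m k -> exists2 z, B z & set_val z = principal_filter k.

Lemma block_uniq (m m' : nat) (B : CLX) :
  block m (set_val B) -> block m' (set_val B) -> m = m'.
Proof.
move=> Bm Bm'; have [_ [z Bz]] := set_valP B; have Uz := ultra_point z.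
have [k [km km']] := filter_ex (filterI (Bm.1 z Bz) (Bm'.1 z Bz)).
exact: level_disj km km'.
Qed.

Lemma block_nbhs (m : nat) (B0 : CLX) :
  block m (set_val B0) -> nbhs B0 [set B : CLX | block m (set_val B)].
Proof.
move=> B0m.
have sub_near : nbhs B0 [set B : CLX | (set_val B : vietoris XT) `<=` trace (level m)].
  by apply: open_nbhs_nbhs; split; [exact/open_CL_sub/open_trace|exact: B0m.1].
pose meets_code (t : m.-tuple bool) :=
  [set B : CLX | (set_val B : vietoris XT) `&` trace [set pickle (m, val t)] !=set0].
have meet_near : \forall B \near B0, forall t, meets_code t B.
  apply: (filter_forall (nbhs_filter B0)) => t; apply: open_nbhs_nbhs; split.
    exact/open_CL_meet/open_trace.
  have [z B0z zt] := B0m.2 (pickle (m, val t)) (ex_intro2 _ _ t I erefl).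
  by exists z; split => //; rewrite /trace /= zt; exact/principal_filterP.
apply: filterS (filterI sub_near meet_near) => B [Bsub Bmeet]; split => // _ [t _ <-].
have [z [Bz zt]] := Bmeet t; exists z => //; exact: ultra_set1_principal (ultra_point z) zt.
Qed.

Lemma not_block_nbhs (m : nat) (B0 : CLX) :
  ~ block m (set_val B0) -> nbhs B0 [set B : CLX | ~ block m (set_val B)].
Proof.
move=> B0Nm; have [B0sub|] := pselect ((set_val B0 : vietoris XT) `<=` trace (level m)).
  have [k mk B0Nk] : exists2 k, level m k &
      ~ exists2 z, (set_val B0 : vietoris XT) z & set_val z = principal_filter k.
    apply: contrapT => B0k; apply: B0Nm; split => // k mk.
    by apply: contrapT => Nk; apply: B0k; exists k.
  have : nbhs B0 [set B : CLX | (set_val B : vietoris XT) `<=` trace (~` [set k])].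
    apply: open_nbhs_nbhs; split; first exact/open_CL_sub/open_trace.
    move=> z B0z; have [zk|//] := in_ultra_setVsetC [set k] (ultra_point z).
    by case: B0Nk; exists z => //; exact: ultra_set1_principal (ultra_point z) zk.
  apply: filterS => B Bsub [_ /(_ k mk) [z Bz zk]].
  by have := Bsub z Bz; rewrite /trace /= zk => /principal_filterP; apply.
move=> /existsNP [z /not_implyP [B0z zNm]].
have : nbhs B0 [set B : CLX | (set_val B : vietoris XT) `&` trace (~` level m) !=set0].
  apply: open_nbhs_nbhs; split; first exact/open_CL_meet/open_trace.
  by exists z; split => //; rewrite traceC.
apply: filterS => B [z' [Bz']]; rewrite traceC => z'Nm [Bsub _].
exact: z'Nm (Bsub z' Bz').
Qed.

Lemma block_limit_point (v : set_system nat) (x : set nat) (B0 : CLX) (z : XT) :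
  UltraFilter v ->
  (forall N, nbhs B0 N -> v [set m | N `&` [set B : CLX | block m (set_val B)] !=set0]) ->
  (set_val B0 : vietoris XT) z -> set_val z (range (branch_code x)) ->
  set_val z = fmap (branch_code x) v.
Proof.
move=> Uv v_blocks B0z z_range; have Uz := ultra_point z.
apply: esym; apply: (@max_filter _ _ Uz).
move=> P zP; pose Q := P `&` range (branch_code x).
have : nbhs B0 [set B : CLX | (set_val B : vietoris XT) `&` trace Q !=set0].
  apply: open_nbhs_nbhs; split; first exact/open_CL_meet/open_trace.
  by exists z; split => //; exact: filterI.
move=> /v_blocks vQ; rewrite fmapE; apply: filterS vQ => m [B [[z' [Bz' z'Q]] Bm]].
have Uz' := ultra_point z'.
have [k [[Pk [m' _ m'k]] mk]] := filter_ex (filterI z'Q (Bm.1 z' Bz')).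
rewrite -m'k in Pk mk.
by rewrite /= -(level_disj (branch_code_level x m') mk).
Qed.

Hypothesis X_omits : forall v, free_ultrafilter v -> exists x, ~ X (fmap (branch_code x) v).

Lemma no_block_nbhs (B0 : CLX) :
  ~ (exists m, block m (set_val B0)) ->
  nbhs B0 [set B : CLX | ~ exists m, block m (set_val B)].
Proof.
move=> B0N; apply: contrapT => blocks_near.
have [|N B0N'|v [fv v_blocks]] :=
    @free_ultra_accumulating _ B0 (fun m => [set B : CLX | block m (set_val B)]).
- by move=> m; apply: not_block_nbhs => B0m; apply: B0N; exists m.
- apply: contrapT => Nblocks; apply: blocks_near; apply: filterS B0N' => B NB [m Bm].
  by apply: Nblocks; exists m, B.
have [x x_omitted] := X_omits fv.
have B0_avoid : (set_val B0 : vietoris XT) `<=` trace (~` range (branch_code x)).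
  move=> z B0z; have [zx|//] := in_ultra_setVsetC (range (branch_code x)) (ultra_point z).
  by case: x_omitted; rewrite -(block_limit_point fv.1 v_blocks B0z zx); exact: set_valP.
have : nbhs B0 [set B : CLX | (set_val B : vietoris XT) `<=` trace (~` range (branch_code x))].
  by apply: open_nbhs_nbhs; split; first exact/open_CL_sub/open_trace.
move=> /v_blocks vN; have Uv := fv.1; have [m [B [B_avoid Bm]]] := filter_ex vN.
have [z Bz zm] := Bm.2 _ (branch_code_level x m).
by have := B_avoid z Bz; rewrite /trace /= zm => /principal_filterP; apply; exists m.
Qed.

Definition block_index (B : CLX) : Rdefinitions.R :=
  if pselect (exists m, block m (set_val B)) then
    (xget 0 [set m | block m (set_val B)]).+1%:R%R
  else 0%R.

Lemma block_indexE (m : nat) (B : CLX) : block m (set_val B) -> block_index B = m.+1%:R%R.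
Proof.
move=> Bm; rewrite /block_index; case: pselect => [Bblock|]; last by case; exists m.
by rewrite (block_uniq (xgetPex 0 Bblock) Bm).
Qed.

Lemma block_index0 (B : CLX) : ~ (exists m, block m (set_val B)) -> block_index B = 0%R.
Proof. by move=> BN; rewrite /block_index; case: pselect. Qed.

Lemma block_index_continuous : continuous block_index.
Proof.
apply: locally_constant_continuous => B0.
have [[m B0m]|B0N] := pselect (exists m, block m (set_val B0)).
  by apply: filterS (block_nbhs B0m) => B Bm; rewrite (block_indexE Bm) (block_indexE B0m).
by apply: filterS (no_block_nbhs B0N) => B BN; rewrite !block_index0.
Qed.

Hypothesis omega_X : omega_in_beta `<=` X.

Lemma CL_not_pseudocompact : ~ pseudocompact CLX.
Proof.
have levelCL m : CL XT (trace (level m)).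
  split; first exact: closed_trace.
  exists (SigSub (mem_set (omega_X (ex_intro2 _ _ (branch_code set0 m) I erefl)))).
  exact/principal_filterP/branch_code_level.
have level_block m : block m (set_val (SigSub (mem_set (levelCL m)))).
  split => // k mk; exists (SigSub (mem_set (omega_X (ex_intro2 _ _ k I erefl)))) => //.
  exact/principal_filterP.
move=> CL_pc; have [M M_bound] := CL_pc _ block_index_continuous.
have := M_bound (SigSub (mem_set (levelCL (Num.truncn M)))).
rewrite (block_indexE (level_block _)) ger0_norm // => M_ge.
by have := lt_le_trans (truncnS_gt M) M_ge; rewrite ltxx.
Qed.

End Hyperspace.

Theorem mainTheorem8 :
  c_regular ->
  (exists q : set nat -> set_system nat,
      (forall a, selective (q a)) /\
      (forall a b, a <> b -> incomparable (q a) (q b))) ->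
  exists X : set sysnat,
    omega_in_beta `<=` X /\ X `<=` beta_omega /\
    (forall J : set (set nat), lt_c J ->
       rel_countably_compact
         [set f : {ptws J -> set_type X} |
            forall i, omega_in_beta (set_val (f i))]) /\
    ~ pseudocompact (set_type (CL (set_type X))).
Proof.
move=> creg [q [q_sel q_incomp]].
have [G [G_small G_cofinal]] := c_regular_cofinal_family creg.
have omega_X : omega_in_beta `<=` Xspace q G by move=> _ [k _ <-]; exact: principal_in_Xspace.
have X_beta : Xspace q G `<=` beta_omega by move=> p [].
exists (Xspace q G); split=> //; split=> //; split.
  by move=> J; exact: Xspace_rel_countably_compact.
apply: CL_not_pseudocompact => // v fv.
exact: Xspace_omits_branch_limits.
Qed.
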